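(* Let $A, C, D$ be binary random variables, with $A$ taking values $a,\overline{a}$, $C$ taking values $c,\overline{c}$, $D$ taking values $d,\overline{d}$, and let $Y$ be a real random variable with finite expectation. Suppose the joint distribution factorizes as \[ p(A,C,D,Y)=p(D)\,p(C\mid D)\,p(A\mid C)\,p(Y\mid A,C). \] Assume that $C$ and $D$ are dependent, and that every event $\{A=x, C=y, D=z\}$ has positive probability. If $E[Y\mid A,D]$ is monotone in $D$, then $RD_{obs}$ lies between $RD_{true}$ and $RD_{crude}$.
   Context: $RD_{true}=E[Y|a,c]p(c)+E[Y|a,\overline{c}]p(\overline{c})-E[Y|\overline{a},c]p(c)-E[Y|\overline{a},\overline{c}]p(\overline{c})$; $RD_{crude}=E[Y|a]-E[Y|\overline{a}]$; $RD_{obs}=E[Y|a,d]p(d)+E[Y|a,\overline{d}]p(\overline{d})-E[Y|\overline{a},d]p(d)-E[Y|\overline{a},\overline{d}]p(\overline{d})$. $E[Y\mid A,D]$ is nondecreasing in $D$ if $E[Y\mid a,d]\ge E[Y\mid a,\overline{d}]$ and $E[Y\mid \overline{a},d]\ge E[Y\mid \overline{a},\overline{d}]$; nonincreasing if both inequalities are reversed; monotone if it is either. *)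

From mathcomp Require Import all_boot all_order all_algebra.
From mathcomp Require Import all_classical all_reals all_analysis.
Set Implicit Arguments. Unset Strict Implicit. Unset Printing Implicit Defensive.
Import Order.TTheory GRing.Theory Num.Theory.
Local Open Scope classical_set_scope.
Local Open Scope ring_scope.

(* Binary random variables are encoded by the event where they take their
   "unbarred" value: A = a on the set [A], A = abar on its complement. *)
Definition ev {T : Type} (X : set T) (b : bool) : set T :=
  if b then X else ~` X.

Definition pr {d} {T : measurableType d} {R : realType}
  (P : probability T R) (S : set T) : R := fine (P S).

Definition condE {d} {T : measurableType d} {R : realType}
  (P : probability T R) (Y : T -> R) (S : set T) : R :=
  fine (\int[P]_(x in S) (Y x)%:E) / pr P S.

Definition RD_true {d} {T : measurableType d} {R : realType}
  (P : probability T R) (A C : set T) (Y : T -> R) : R :=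
  condE P Y (A `&` C) * pr P C + condE P Y (A `&` ~` C) * pr P (~` C)
  - condE P Y (~` A `&` C) * pr P C - condE P Y (~` A `&` ~` C) * pr P (~` C).

Definition RD_crude {d} {T : measurableType d} {R : realType}
  (P : probability T R) (A : set T) (Y : T -> R) : R :=
  condE P Y A - condE P Y (~` A).

Definition RD_obs {d} {T : measurableType d} {R : realType}
  (P : probability T R) (A D : set T) (Y : T -> R) : R :=
  condE P Y (A `&` D) * pr P D + condE P Y (A `&` ~` D) * pr P (~` D)
  - condE P Y (~` A `&` D) * pr P D - condE P Y (~` A `&` ~` D) * pr P (~` D).

Definition nondecr_in_D {d} {T : measurableType d} {R : realType}
  (P : probability T R) (A D : set T) (Y : T -> R) : Prop :=
  condE P Y (A `&` D) >= condE P Y (A `&` ~` D) /\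
  condE P Y (~` A `&` D) >= condE P Y (~` A `&` ~` D).

Definition nonincr_in_D {d} {T : measurableType d} {R : realType}
  (P : probability T R) (A D : set T) (Y : T -> R) : Prop :=
  condE P Y (A `&` D) <= condE P Y (A `&` ~` D) /\
  condE P Y (~` A `&` D) <= condE P Y (~` A `&` ~` D).

Definition monotone_in_D {d} {T : measurableType d} {R : realType}
  (P : probability T R) (A D : set T) (Y : T -> R) : Prop :=
  nondecr_in_D P A D Y \/ nonincr_in_D P A D Y.

(* Factorization p(A,C,D,Y) = p(D) p(C|D) p(A|C) p(Y|A,C), i.e.
   p(A | C, D) = p(A | C) and p(Y | A, C, D) = p(Y | A, C),
   written in cross-multiplied form (all conditioning events have positive
   probability under the standing assumptions). *)
Definition factorizes {d} {T : measurableType d} {R : realType}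
  (P : probability T R) (A C D : set T) (Y : T -> R) : Prop :=
  (forall x y z : bool,
     pr P (ev A x `&` ev C y `&` ev D z) * pr P (ev C y)
     = pr P (ev A x `&` ev C y) * pr P (ev C y `&` ev D z)) /\
  (forall (B : set R), measurable B -> forall x y z : bool,
     pr P (Y @^-1` B `&` ev A x `&` ev C y `&` ev D z) * pr P (ev A x `&` ev C y)
     = pr P (Y @^-1` B `&` ev A x `&` ev C y) * pr P (ev A x `&` ev C y `&` ev D z)).

Definition between {R : realType} (x y z : R) : Prop :=
  (x <= y <= z) \/ (z <= y <= x).

(* Under the factorization, A and D are independent given C, and the
   conditional law of Y given (A, C, D) depends on (A, C) only, so everything
   is a rational function of q_y = P(a | y), r_yz = P(y, z) and
   mu_xy = E[Y | x, y].  With Delta_x = mu_xc - mu_xcbar,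
   delta = r_cd r_cbar,dbar - r_c,dbar r_cbar,d and
   E_x = E[Y | x, d] - E[Y | x, dbar], one computes
     RD_obs - RD_true  = (q_c - q_cbar) (w_a Delta_a + w_abar Delta_abar),
     RD_crude - RD_obs = (q_c - q_cbar) delta (E_a / P(a) + E_abar / P(abar)),
     E_x = k_x delta Delta_x,
   with w_x, k_x > 0.  Hence (RD_obs - RD_true) (RD_crude - RD_obs) equals
   (q_c - q_cbar)^2 (w_a/k_a E_a + w_abar/k_abar E_abar) (E_a/P(a) + E_abar/P(abar)),
   which is nonnegative as soon as E_a and E_abar have the same sign, i.e. when
   E[Y | A, D] is monotone in D. *)

From mathcomp Require Import all_boot all_order all_algebra.
From mathcomp Require Import all_classical all_reals all_analysis.
From mathcomp Require Import measurable_realfun.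
From mathcomp Require Import ring lra.
Set Implicit Arguments. Unset Strict Implicit. Unset Printing Implicit Defensive.
Import Order.TTheory GRing.Theory Num.Theory.
Local Open Scope classical_set_scope.
Local Open Scope ring_scope.

Lemma mul_same_sign_ge0 (R : realDomainType) (a b c e u v : R) :
  0 <= a -> 0 <= b -> 0 <= c -> 0 <= e ->
  (0 <= u /\ 0 <= v) \/ (u <= 0 /\ v <= 0) ->
  0 <= (a * u + b * v) * (c * u + e * v).
Proof.
move=> a0 b0 c0 e0 [[u0 v0]|[u0 v0]].
  by apply: mulr_ge0; apply: addr_ge0; apply: mulr_ge0.
rewrite -mulrNN !opprD -!mulrN.
by apply: mulr_ge0; apply: addr_ge0; apply: mulr_ge0; rewrite ?oppr_ge0.
Qed.

Lemma between_of_mul_ge0 (R : realType) (x y z : R) :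
  0 <= (y - x) * (z - y) -> between x y z.
Proof.
move=> h; rewrite /between.
have [xy|yx] := lerP x y; have [yz|zy] := lerP y z.
- by left; apply/andP.
- by right; apply/andP; split; [exact: ltW | nra].
- by right; apply/andP; split; [nra | exact: ltW].
- by right; apply/andP; split; exact: ltW.
Qed.

(* [q y] = P(A = a | C = y), [r y z] = P(C = y, D = z) and
   [mu x y] = E[Y | A = x, C = y], where [true] stands for the unbarred value. *)
Section cell_model.
Variables (R : realFieldType) (q : bool -> R) (r mu : bool -> bool -> R).

Definition pA_C x y := if x then q y else 1 - q y.
Definition pcell x y z := pA_C x y * r y z.
Definition pC y := r y true + r y false.
Definition pD z := r true z + r false z.
Definition pAD x z := pcell x true z + pcell x false z.
Definition pA x := pAD x true + pAD x false.
Definition numAD x z := mu x true * pcell x true z + mu x false * pcell x false z.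
Definition meanAD x z := numAD x z / pAD x z.
Definition meanA x := (numAD x true + numAD x false) / pA x.

Definition rd_true :=
  mu true true * pC true + mu true false * pC false
  - mu false true * pC true - mu false false * pC false.
Definition rd_obs :=
  meanAD true true * pD true + meanAD true false * pD false
  - meanAD false true * pD true - meanAD false false * pD false.
Definition rd_crude := meanA true - meanA false.

Definition assocAC := q true - q false.
Definition assocCD := r true true * r false false - r true false * r false true.
Definition gapC x := mu x true - mu x false.
Definition gapD x := meanAD x true - meanAD x false.
Definition confounding_weight x :=
  r true true * r false true / pAD x true + r true false * r false false / pAD x false.

Hypotheses (q_gt0 : forall y, 0 < q y) (q_lt1 : forall y, q y < 1).
Hypothesis r_gt0 : forall y z, 0 < r y z.

Lemma pA_C_gt0 x y : 0 < pA_C x y.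
Proof. by case: x; rewrite /= ?subr_gt0. Qed.

Lemma pAD_gt0 x z : 0 < pAD x z.
Proof. by apply: addr_gt0; apply: mulr_gt0; rewrite ?pA_C_gt0. Qed.

Lemma pAD_neq0 x z : pAD x z != 0.
Proof. by rewrite gt_eqF ?pAD_gt0. Qed.

Lemma pA_gt0 x : 0 < pA x.
Proof. by apply: addr_gt0; apply: pAD_gt0. Qed.

Lemma confounding_weight_gt0 x : 0 < confounding_weight x.
Proof.
by apply: addr_gt0; apply: divr_gt0; rewrite ?pAD_gt0 ?mulr_gt0.
Qed.

Lemma rd_obs_sub_true :
  rd_obs - rd_true =
  assocAC * (confounding_weight true * gapC true + confounding_weight false * gapC false).
Proof.
move: (pAD_neq0 true true) (pAD_neq0 true false).
move: (pAD_neq0 false true) (pAD_neq0 false false).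
rewrite /rd_obs /rd_true /meanAD /numAD /confounding_weight /gapC /assocAC /pC /pD.
rewrite /pAD /pcell /= => ? ? ? ?.
by field; do ![apply/andP; split].
Qed.

Lemma gapD_factor x :
  gapD x = pA_C x true * pA_C x false / (pAD x true * pAD x false) * assocCD * gapC x.
Proof.
move: (pAD_neq0 x true) (pAD_neq0 x false).
rewrite /gapD /meanAD /numAD /gapC /assocCD /pAD /pcell => ? ?.
by field; do ![apply/andP; split].
Qed.

Hypothesis r_sum1 : pC true + pC false = 1.

Lemma pAD_sub_pA_pD x :
  pAD x true - pA x * pD true = (if x then assocAC else - assocAC) * assocCD.
Proof.
have r00E : r false false = 1 - r true true - r true false - r false true.
  by move: r_sum1; rewrite /pC; lra.
rewrite /pA /pAD /pD /pcell /assocAC /assocCD r00E.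
by case: x => /=; ring.
Qed.

Lemma meanA_sub_meanAD x :
  meanA x - (meanAD x true * pD true + meanAD x false * pD false) =
  (pAD x true - pA x * pD true) / pA x * gapD x.
Proof.
have pD_false : pD false = 1 - pD true.
  by move: r_sum1; rewrite /pC /pD; lra.
have numADE z : numAD x z = meanAD x z * pAD x z.
  by rewrite /meanAD divfK ?pAD_neq0.
have := pA_gt0 x; rewrite /meanA /gapD /pA pD_false !numADE => pA_pos.
by field; rewrite gt_eqF.
Qed.

Lemma rd_crude_sub_obs :
  rd_crude - rd_obs = assocAC * assocCD * (gapD true / pA true + gapD false / pA false).
Proof.
have -> : rd_crude - rd_obs =
    (meanA true - (meanAD true true * pD true + meanAD true false * pD false))
  - (meanA false - (meanAD false true * pD true + meanAD false false * pD false)).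
  by rewrite /rd_crude /rd_obs; ring.
by rewrite !meanA_sub_meanAD !pAD_sub_pA_pD /=; ring.
Qed.

Definition gapD_same_sign :=
  (0 <= gapD true /\ 0 <= gapD false) \/ (gapD true <= 0 /\ gapD false <= 0).

Lemma rd_obs_mediates : gapD_same_sign ->
  0 <= (rd_obs - rd_true) * (rd_crude - rd_obs).
Proof.
move=> sgn; rewrite rd_obs_sub_true rd_crude_sub_obs.
(* By [gapD_factor], [assocCD * gapC x] is a positive multiple of [gapD x]. *)
pose k x := pA_C x true * pA_C x false / (pAD x true * pAD x false).
have k_gt0 x : 0 < k x.
  by apply: divr_gt0; apply: mulr_gt0; rewrite ?pA_C_gt0 ?pAD_gt0.
pose w x := confounding_weight x / k x.
have w_ge0 x : 0 <= w x by apply/ltW/divr_gt0; rewrite ?k_gt0 ?confounding_weight_gt0.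
have -> : assocAC * (confounding_weight true * gapC true
                     + confounding_weight false * gapC false)
      * (assocAC * assocCD * (gapD true / pA true + gapD false / pA false)) =
    assocAC ^+ 2 * ((w true * gapD true + w false * gapD false)
                   * ((pA true)^-1 * gapD true + (pA false)^-1 * gapD false)).
  rewrite /w !gapD_factor -/(k true) -/(k false).
  by field; rewrite !gt_eqF ?pA_gt0 ?k_gt0.
apply: mulr_ge0; first exact: sqr_ge0.
by apply: mul_same_sign_ge0 => //; rewrite invr_ge0 ltW ?pA_gt0.
Qed.

End cell_model.

Section transfer.
Context d (T : measurableType d) (R : realType) (mu : {measure set T -> \bar R}).

Lemma integral_mrestr (S : set T) (mS : measurable S) (f : T -> \bar R) :
  measurable_fun [set: T] f -> (\int[mrestr mu mS]_x f x = \int[mu]_(x in S) f x)%E.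
Proof.
move=> mf; have mCS : measurable (~` S) by exact: measurableC.
rewrite -(setUv S) integral_setU //; last 2 first.
- by rewrite setUv.
- by apply/disj_set2P; rewrite setICr.
rewrite [X in X + _](eq_measure_integral mu); last first.
  by move=> B mB BS; change (mu (B `&` S) = mu B); rewrite setIidl.
rewrite [X in _ + X](eq_measure_integral mzero) ?integral_measure_zero ?adde0 //.
move=> B mB BS; change (mu (B `&` S) = 0%E); rewrite (_ : B `&` S = set0) ?measure0 //.
by apply/seteqP; split => // x [/BS].
Qed.

Variables (Y : T -> R) (mY : measurable_fun [set: T] Y).
Variables (S1 S2 : set T) (mS1 : measurable S1) (mS2 : measurable S2).
Variables (c1 c2 : {nonneg R}).
Hypothesis same_law : forall B, measurable B ->
  (c1%:num%:E * mu (Y @^-1` B `&` S1) = c2%:num%:E * mu (Y @^-1` B `&` S2))%E.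

Lemma ge0_integral_transfer (h : R -> \bar R) :
  measurable_fun [set: R] h -> (forall t, 0 <= h t)%E ->
  (c1%:num%:E * \int[mu]_(x in S1) h (Y x) = c2%:num%:E * \int[mu]_(x in S2) h (Y x))%E.
Proof.
move=> mh h_ge0.
have pushE S (mS : measurable S) (c : {nonneg R}) :
    (c%:num%:E * \int[mu]_(x in S) h (Y x) =
     \int[pushforward (mscale c (mrestr mu mS)) Y]_y h y)%E.
  have mhY : measurable_fun [set: T] (h \o Y) by exact: measurableT_comp.
  rewrite [RHS]ge0_integral_pushforward // preimage_setT.
  by rewrite ge0_integral_mscale ?integral_mrestr // => x _; exact: h_ge0.
rewrite (pushE _ mS1) (pushE _ mS2); apply: eq_measure_integral => B mB _.
exact: same_law.
Qed.

Lemma integral_transfer : mu.-integrable setT (EFin \o Y) ->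
  (c1%:num%:E * \int[mu]_(x in S1) (Y x)%:E = c2%:num%:E * \int[mu]_(x in S2) (Y x)%:E)%E.
Proof.
move=> iY.
have mE : measurable_fun [set: R] (@EFin R) by exact: EFin_measurable.
have partsE S : (\int[mu]_(x in S) (Y x)%:E =
    \int[mu]_(x in S) (@EFin R)^\+ (Y x) - \int[mu]_(x in S) (@EFin R)^\- (Y x))%E.
  by rewrite [LHS](integralE _ _ (EFin \o Y)) funepos_comp funeneg_comp.
have iYS S : measurable S -> mu.-integrable S (EFin \o Y).
  by move=> mS; apply: integrableS iY.
have pos_fin S : measurable S -> (\int[mu]_(x in S) (@EFin R)^\+ (Y x))%E \is a fin_num.
  move=> mS; apply: integrable_fin_num => //.
  by have := integrable_funepos mS (iYS S mS); rewrite funepos_comp.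
rewrite (partsE S1) (partsE S2).
rewrite [LHS]muleBr ?fin_num_adde_defr ?pos_fin // [RHS]muleBr ?fin_num_adde_defr ?pos_fin //.
by rewrite (ge0_integral_transfer (measurable_funepos mE) (fun t => funepos_ge0 _ t))
  (ge0_integral_transfer (measurable_funeneg mE) (fun t => funeneg_ge0 _ t)).
Qed.

End transfer.

Lemma measurable_ev d (T : measurableType d) (X : set T) b :
  measurable X -> measurable (ev X b).
Proof. by case: b => //= mX; exact: measurableC. Qed.

Section probability.
Context d (T : measurableType d) (R : realType) (P : probability T R).

Lemma pr_ge0 S : 0 <= pr P S.
Proof. exact: fine_ge0. Qed.

Lemma prE S : measurable S -> (pr P S)%:E = P S.
Proof. by move=> mS; rewrite /pr fineK // fin_num_measure. Qed.

Lemma pr_splitr S X : measurable S -> measurable X ->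
  pr P S = pr P (S `&` X) + pr P (S `&` ~` X).
Proof.
move=> mS mX; apply: EFin_inj; rewrite EFinD !prE //; last 2 first.
- by apply: measurableI => //; exact: measurableC.
- exact: measurableI.
rewrite -measureU; last by rewrite setIACA setICr setI0.
- by rewrite -setIUr setUv setIT.
- exact: measurableI.
- by apply: measurableI => //; exact: measurableC.
Qed.

Lemma pr_splitl S X : measurable S -> measurable X ->
  pr P S = pr P (X `&` S) + pr P (~` X `&` S).
Proof. by move=> mS mX; rewrite (pr_splitr mS mX) setIC [in X in _ + X]setIC. Qed.

Definition expect_on (Y : T -> R) S := fine (\int[P]_(x in S) (Y x)%:E).

Lemma condEE (Y : T -> R) S : condE P Y S = expect_on Y S / pr P S.
Proof. by []. Qed.

Variables (Y : T -> R) (iY : P.-integrable setT (EFin \o Y)).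

Lemma integral_on_fin_num S : measurable S ->
  (\int[P]_(x in S) (Y x)%:E)%E \is a fin_num.
Proof. by move=> mS; apply: integrable_fin_num => //; exact: integrableS iY. Qed.

Lemma expect_on_splitr S X : measurable S -> measurable X ->
  expect_on Y S = expect_on Y (S `&` X) + expect_on Y (S `&` ~` X).
Proof.
move=> mS mX.
have mSX : measurable (S `&` X) by exact: measurableI.
have mSnX : measurable (S `&` ~` X) by apply: measurableI => //; exact: measurableC.
rewrite /expect_on -fineD ?integral_on_fin_num // -integral_setU //.
- by rewrite -setIUr setUv setIT.
- by apply: measurable_funTS; exact: measurable_int iY.
- by apply/disj_set2P; rewrite setIACA setICr setI0.
Qed.

Hypothesis mY : measurable_fun setT Y.

Lemma expect_on_transfer S1 S2 (c1 c2 : R) : measurable S1 -> measurable S2 ->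
  0 <= c1 -> 0 <= c2 ->
  (forall B, measurable B ->
     c1 * pr P (Y @^-1` B `&` S1) = c2 * pr P (Y @^-1` B `&` S2)) ->
  c1 * expect_on Y S1 = c2 * expect_on Y S2.
Proof.
move=> mS1 mS2 c1_ge0 c2_ge0 same_law.
have mYB B : measurable B -> measurable (Y @^-1` B).
  by move=> mB; rewrite -[_ @^-1` _]setTI; exact: mY.
have law_eq : forall B, measurable B ->
    ((NngNum c1_ge0)%:num%:E * P (Y @^-1` B `&` S1) =
     (NngNum c2_ge0)%:num%:E * P (Y @^-1` B `&` S2))%E.
  move=> B mB; rewrite -!prE -?EFinM ?same_law //; apply: measurableI => //; exact: mYB.
have := integral_transfer mY mS1 mS2 law_eq iY.
rewrite /expect_on -(fineK (integral_on_fin_num mS1)) -(fineK (integral_on_fin_num mS2)).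
by rewrite -!EFinM => -[->].
Qed.

End probability.

Section causal_model.
Context d (T : measurableType d) (R : realType) (P : probability T R).
Variables (A C D : set T) (Y : T -> R).
Hypotheses (mA : measurable A) (mC : measurable C) (mD : measurable D).
Hypotheses (mY : measurable_fun setT Y) (iY : P.-integrable setT (EFin \o Y)).
Hypothesis fact : factorizes P A C D Y.
Hypothesis pos : forall x y z : bool, 0 < pr P (ev A x `&` ev C y `&` ev D z).

Definition prA_givenC y := pr P (A `&` ev C y) / pr P (ev C y).
Definition prCD y z := pr P (ev C y `&` ev D z).
Definition condE_AC x y := condE P Y (ev A x `&` ev C y).

Let mAx x : measurable (ev A x) := measurable_ev x mA.
Let mCy y : measurable (ev C y) := measurable_ev y mC.
Let mDz z : measurable (ev D z) := measurable_ev z mD.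
Let mAC x y : measurable (ev A x `&` ev C y) := measurableI _ _ (mAx x) (mCy y).
Let mAD x z : measurable (ev A x `&` ev D z) := measurableI _ _ (mAx x) (mDz z).
Let mCD y z : measurable (ev C y `&` ev D z) := measurableI _ _ (mCy y) (mDz z).
Let mcell x y z : measurable (ev A x `&` ev C y `&` ev D z) :=
  measurableI _ _ (mAC x y) (mDz z).

Lemma prCE y : pr P (ev C y) = pC prCD y.
Proof. exact: pr_splitr. Qed.

Lemma prDE z : pr P (ev D z) = pD prCD z.
Proof. exact: pr_splitl. Qed.

Lemma prCD_cells y z :
  prCD y z = pr P (A `&` ev C y `&` ev D z) + pr P (~` A `&` ev C y `&` ev D z).
Proof. by rewrite /prCD (pr_splitl P (mCD y z) mA) !setIA. Qed.

Lemma prCD_gt0 y z : 0 < prCD y z.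
Proof.
by rewrite prCD_cells; apply: addr_gt0; [exact: (pos true) | exact: (pos false)].
Qed.

Lemma prC_gt0 y : 0 < pr P (ev C y).
Proof. by rewrite prCE addr_gt0 ?prCD_gt0. Qed.

Lemma prAC_gt0 x y : 0 < pr P (ev A x `&` ev C y).
Proof.
rewrite (pr_splitr P (mAC x y) mD).
by apply: addr_gt0; [exact: (pos x y true) | exact: (pos x y false)].
Qed.

Lemma prAC_factor x y :
  pr P (ev A x `&` ev C y) = pA_C prA_givenC x y * pr P (ev C y).
Proof.
have prC_neq0 : pr P (ev C y) != 0 by rewrite gt_eqF ?prC_gt0.
case: x => /=; first by rewrite /prA_givenC divfK.
rewrite mulrBl mul1r /prA_givenC divfK // [in RHS](pr_splitl P (mCy y) mA).
by rewrite addrC addKr.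
Qed.

Lemma pr_cellE x y z :
  pr P (ev A x `&` ev C y `&` ev D z) = pcell prA_givenC prCD x y z.
Proof.
have := fact.1 x y z; rewrite prAC_factor mulrAC.
by move/(mulIf (lt0r_neq0 (prC_gt0 y))).
Qed.

(* On a cell, Y has the law it has on the (A, C)-margin, rescaled: hence the
   same conditional mean. *)
Lemma expect_on_cell x y z :
  expect_on P Y (ev A x `&` ev C y `&` ev D z) =
  condE_AC x y * pcell prA_givenC prCD x y z.
Proof.
have prAC_neq0 : pr P (ev A x `&` ev C y) != 0 by rewrite lt0r_neq0 ?prAC_gt0.
have same_law B : measurable B ->
    pr P (ev A x `&` ev C y) * pr P (Y @^-1` B `&` (ev A x `&` ev C y `&` ev D z)) =
    pr P (ev A x `&` ev C y `&` ev D z) * pr P (Y @^-1` B `&` (ev A x `&` ev C y)).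
  by move=> mB; rewrite !setIA mulrC fact.2 // mulrC.
have := expect_on_transfer iY mY (mcell x y z) (mAC x y) (pr_ge0 _ _) (pr_ge0 _ _) same_law.
rewrite -pr_cellE /condE_AC condEE.
move=> transfer_eq; apply: (mulfI prAC_neq0); rewrite transfer_eq.
by field.
Qed.

Lemma prADE x z : pr P (ev A x `&` ev D z) = pAD prA_givenC prCD x z.
Proof.
rewrite (pr_splitr P (mAD x z) mC) !(setIAC _ (ev D z)).
by rewrite (pr_cellE x true z) (pr_cellE x false z).
Qed.

Lemma prAE x : pr P (ev A x) = pA prA_givenC prCD x.
Proof. by rewrite (pr_splitr P (mAx x) mD) (prADE x true) (prADE x false). Qed.

Lemma expect_on_ADE x z :
  expect_on P Y (ev A x `&` ev D z) = numAD prA_givenC prCD condE_AC x z.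
Proof.
rewrite (expect_on_splitr iY (mAD x z) mC) !(setIAC _ (ev D z)).
by rewrite (expect_on_cell x true z) (expect_on_cell x false z).
Qed.

Lemma condE_ADE x z :
  condE P Y (ev A x `&` ev D z) = meanAD prA_givenC prCD condE_AC x z.
Proof. by rewrite condEE expect_on_ADE prADE. Qed.

Lemma condE_AE x : condE P Y (ev A x) = meanA prA_givenC prCD condE_AC x.
Proof.
rewrite condEE prAE (expect_on_splitr iY (mAx x) mD).
by rewrite (expect_on_ADE x true) (expect_on_ADE x false).
Qed.

Lemma RD_trueE : RD_true P A C Y = rd_true prCD condE_AC.
Proof. by rewrite /rd_true -!prCE. Qed.

Lemma RD_obsE : RD_obs P A D Y = rd_obs prA_givenC prCD condE_AC.
Proof. by rewrite /rd_obs -!prDE -!condE_ADE. Qed.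

Lemma RD_crudeE : RD_crude P A Y = rd_crude prA_givenC prCD condE_AC.
Proof. by rewrite /rd_crude -!condE_AE. Qed.

Lemma prA_givenC_gt0 y : 0 < prA_givenC y.
Proof. by rewrite divr_gt0 ?prC_gt0 // (prAC_gt0 true). Qed.

Lemma prA_givenC_lt1 y : prA_givenC y < 1.
Proof.
rewrite ltr_pdivrMr ?prC_gt0 // mul1r [X in _ < X](pr_splitl P (mCy y) mA).
by rewrite ltrDl (prAC_gt0 false).
Qed.

Lemma prCD_sum1 : pC prCD true + pC prCD false = 1.
Proof.
have <- : pr P setT = 1 by rewrite /pr probability_setT.
by rewrite -!prCE (pr_splitl P measurableT mC) !setIT.
Qed.

Lemma monotone_gapD_same_sign :
  monotone_in_D P A D Y -> gapD_same_sign prA_givenC prCD condE_AC.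
Proof.
by rewrite /gapD_same_sign /gapD !subr_ge0 !subr_le0 -!condE_ADE.
Qed.

End causal_model.

Theorem corollary2 (d : measure_display) (T : measurableType d) (R : realType)
  (P : probability T R) (A C D : set T) (Y : T -> R)
  (mA : measurable A) (mC : measurable C) (mD : measurable D)
  (mY : measurable_fun setT Y)
  (iY : P.-integrable setT (EFin \o Y))
  (fact : factorizes P A C D Y)
  (dep : pr P (C `&` D) <> pr P C * pr P D)
  (pos : forall x y z : bool, 0 < pr P (ev A x `&` ev C y `&` ev D z))
  (mono : monotone_in_D P A D Y) :
  between (RD_true P A C Y) (RD_obs P A D Y) (RD_crude P A Y).
Proof.
rewrite (RD_trueE P A Y mC mD) (RD_obsE mA mC mD mY iY fact pos).
rewrite (RD_crudeE mA mC mD mY iY fact pos).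
apply/between_of_mul_ge0/rd_obs_mediates.
- exact: prA_givenC_gt0 mA mC mD pos.
- exact: prA_givenC_lt1 mA mC mD pos.
- exact: prCD_gt0 mA mC mD pos.
- exact: prCD_sum1.
- exact: monotone_gapD_same_sign mA mC mD mY iY fact pos mono.
Qed.
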